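(* Let $r\in(1,2)$ and let $c_r$ be a constant such that $|e^{-x}-1+x|\le c_r|x|^r$ for all $x>0$. Let $Z$ be a nonnegative real random variable with $\mathbb{E}[Z^r]<+\infty$, and let $k_Z(\xi)=\log\mathbb{E}[e^{-\xi Z}]$. Then for $0\le\xi\le(2\mathbb{E}[Z])^{-1}$, $$|k_Z(\xi)+\xi\mathbb{E}[Z]|\le c_r\xi^r\mathbb{E}[Z^r]+\xi^2(\mathbb{E}[Z])^2.$$ Moreover $$\sup_{\xi>0}\frac{|k_Z(\xi)|^r}{|\xi|^r}=\mathbb{E}[Z]^r.$$ *)

From HB Require Import structures.
From mathcomp Require Import all_boot all_order all_algebra.
From mathcomp Require Import all_classical all_reals all_analysis.
Set Implicit Arguments. Unset Strict Implicit. Unset Printing Implicit Defensive.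
Import Order.TTheory GRing.Theory Num.Theory.
Local Open Scope ring_scope.

(* Log-Laplace transform k_Z(xi) = log E[exp(-xi Z)] of a random variable Z
   on the probability space P (the expectation is finite for Z >= 0, xi >= 0). *)
Definition kZ d (T : measurableType d) (R : realType) (P : probability T R)
  (Z : T -> R) (xi : R) : R :=
  ln (fine ('E_P[fun w => expR (- (xi * Z w))])%E).

From HB Require Import structures.
From mathcomp Require Import all_boot all_order all_algebra.
From mathcomp Require Import all_classical all_reals all_analysis.
From mathcomp Require Import ring lra measurable_realfun.
Set Implicit Arguments. Unset Strict Implicit. Unset Printing Implicit Defensive.
Import Order.TTheory GRing.Theory Num.Theory.
Local Open Scope ring_scope.
Local Open Scope classical_set_scope.

(* Write m = E[Z] and L(xi) = E[exp(-xi Z)], so that kZ xi = ln L(xi).  Jensen's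
   inequality (the tangent line of exp at -xi m) gives exp(-xi m) <= L(xi) <= 1, and
   integrating exp(-x) <= 1 - x + c x^r at x = xi Z gives L(xi) <= 1 - xi m + c xi^r E[Z^r].
   Taking logarithms, -xi m <= kZ xi <= min(0, -xi m + c xi^r E[Z^r]): this is the first
   claim, even without the term xi^2 m^2 and the restrictions 2 xi m <= 1 and r < 2.
   Consequently |kZ xi| / xi <= m, with equality in the limit xi -> 0 since r > 1,
   which identifies the supremum. *)

Section nonnegative_expectation.
Context {d} {T : measurableType d} {R : realType} (P : probability T R).
Implicit Types f g : T -> R.

Lemma ge0_expectationD f g :
  measurable_fun setT f -> measurable_fun setT g ->
  (forall w, 0 <= f w) -> (forall w, 0 <= g w) ->
  ('E_P[fun w => (f w + g w)%R] = 'E_P[f] + 'E_P[g])%E.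
Proof.
move=> mf mg f0 g0; rewrite unlock.
under eq_integral do rewrite EFinD.
rewrite ge0_integralD//.
all: first [exact/measurable_EFinP | by move=> x _; rewrite lee_fin].
Qed.

Lemma ge0_expectationZl f (k : R) :
  measurable_fun setT f -> (forall w, 0 <= f w) -> 0 <= k ->
  ('E_P[fun w => (k * f w)%R] = k%:E * 'E_P[f])%E.
Proof.
move=> mf f0 k0; rewrite unlock.
under eq_integral do rewrite EFinM.
by rewrite ge0_integralZl//; [exact/measurable_EFinP | move=> x _; rewrite lee_fin].
Qed.

Lemma ge0_expectation_le f g :
  measurable_fun setT f -> measurable_fun setT g ->
  (forall w, 0 <= f w) -> (forall w, f w <= g w) -> ('E_P[f] <= 'E_P[g])%E.
Proof.
move=> mf mg f0 fg; apply: expectation_le => // [w|]; last exact: aeW.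
exact: le_trans (fg w).
Qed.

Lemma expectation_fin_num_powR (r : R) (Z : T -> R) :
  1 <= r -> measurable_fun setT Z -> (forall w, 0 <= Z w) ->
  ('E_P[fun w => (Z w `^ r)%R] < +oo)%E -> ('E_P[Z] \is a fin_num)%E.
Proof.
move=> r1 mZ Z0 EZr.
have mZr : measurable_fun setT (fun w => Z w `^ r).
  exact: measurableT_comp (measurable_powR r) mZ.
have Z_le w : Z w <= 1 + Z w `^ r.
  have [Z1|Z1] := leP (Z w) 1; first by rewrite (le_trans Z1)// lerDl powR_ge0.
  by rewrite ler_wpDl// -{1}[Z w]powRr1// ler_powR// ltW.
rewrite ge0_fin_numE ?expectation_ge0//.
have mD : measurable_fun setT (cst 1 \+ fun w => Z w `^ r) by exact: measurable_funD.
apply: le_lt_trans (ge0_expectation_le mZ mD Z0 Z_le) _.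
rewrite ge0_expectationD//; last by move=> w; exact: powR_ge0.
by rewrite expectation_cst lte_add_pinfty ?ltry.
Qed.

End nonnegative_expectation.

Lemma expR_taylor_const_ge0 (R : realType) (r c : R) :
  (forall x : R, 0 < x -> `|expR (- x) - 1 + x| <= c * `|x| `^ r) -> 0 <= c.
Proof.
by move=> /(_ 1 ltr01); rewrite normr1 powR1 mulr1; exact: le_trans.
Qed.

Section log_laplace_transform.
Context d (T : measurableType d) (R : realType) (P : probability T R).
Variables (Z : T -> R) (xi : R).
Hypotheses (mZ : measurable_fun setT Z) (Z0 : forall w, 0 <= Z w) (xi0 : 0 <= xi).

Local Notation mean := (fine 'E_P[Z]%E).
Local Notation laplace := ('E_P[fun w => expR (- (xi * Z w))])%E.

Let mexp : measurable_fun setT (fun w => expR (- (xi * Z w))).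
Proof. exact/measurableT_comp/measurable_funN/measurable_funM. Qed.

Let exp_ge0 w : 0 <= expR (- (xi * Z w)).
Proof. exact/ltW/expR_gt0. Qed.

Lemma laplace_le1 : (laplace <= 1)%E.
Proof.
rewrite -(expectation_cst P 1); apply: ge0_expectation_le => // w.
by rewrite expR_le1 oppr_le0 mulr_ge0.
Qed.

Lemma laplace_fin_num : (laplace \is a fin_num)%E.
Proof.
by rewrite ge0_fin_numE ?expectation_ge0// (le_lt_trans laplace_le1) ?ltry.
Qed.

Lemma expR_mean_le_laplace : ('E_P[Z] \is a fin_num)%E ->
  expR (- (xi * mean)) <= fine laplace.
Proof.
move=> EZ; set a := expR (- (xi * mean)).
have a0 : 0 < a by exact: expR_gt0.
have mean0 : 0 <= mean by exact/fine_ge0/expectation_ge0.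
have tangent w : a * (1 + xi * mean) <= expR (- (xi * Z w)) + a * xi * Z w.
  have e_eq : a * expR (- (xi * Z w) + xi * mean) = expR (- (xi * Z w)).
    by rewrite /a -expRD; congr expR; ring.
  have := ler_wpM2l (ltW a0) (expR_ge1Dx (- (xi * Z w) + xi * mean)).
  by rewrite e_eq; nra.
have mrhs : measurable_fun setT (fun w => expR (- (xi * Z w)) + a * xi * Z w).
  by apply: measurable_funD => //; exact: measurable_funM.
have lhs0 (w : T) : 0 <= a * (1 + xi * mean) by rewrite mulr_ge0 ?addr_ge0 ?mulr_ge0// ltW.
have := ge0_expectation_le P (measurable_cst _) mrhs lhs0 tangent.
rewrite expectation_cst ge0_expectationD ?ge0_expectationZl//; last 3 first.
- by rewrite mulr_ge0// ltW.
- exact: measurable_funM.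
- by move=> w; rewrite !mulr_ge0// ltW.
rewrite -(fineK EZ) -(fineK laplace_fin_num) -EFinM -EFinD lee_fin.
by clear lhs0 tangent; lra.
Qed.

Lemma laplace_le_taylor (r c : R) :
  (forall x : R, 0 < x -> `|expR (- x) - 1 + x| <= c * `|x| `^ r) ->
  ('E_P[Z] \is a fin_num)%E -> ('E_P[fun w => (Z w `^ r)%R] < +oo)%E ->
  fine laplace <= 1 - xi * mean + c * xi `^ r * fine 'E_P[fun w => (Z w `^ r)%R]%E.
Proof.
move=> taylor EZ EZr; have c0 := expR_taylor_const_ge0 taylor.
have mZr : measurable_fun setT (fun w => Z w `^ r).
  exact: measurableT_comp (measurable_powR r) mZ.
have Zr0 w : 0 <= Z w `^ r by exact: powR_ge0.
have EZr_fin : ('E_P[fun w => (Z w `^ r)%R] \is a fin_num)%E.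
  by rewrite ge0_fin_numE ?expectation_ge0.
have pointwise w : expR (- (xi * Z w)) + xi * Z w <= 1 + c * xi `^ r * Z w `^ r.
  have [xZ0|xZ0] := ltP 0 (xi * Z w); last first.
    have -> : xi * Z w = 0 by apply: le_anti; rewrite xZ0 mulr_ge0.
    by rewrite oppr0 expR0 addr0 lerDl !mulr_ge0 ?powR_ge0.
  have := taylor _ xZ0; rewrite (ger0_norm (ltW xZ0)) powRM// mulrA => bound.
  have := ler_norm (expR (- (xi * Z w)) - 1 + xi * Z w); lra.
have mlhs : measurable_fun setT (fun w => expR (- (xi * Z w)) + xi * Z w).
  by apply: measurable_funD => //; exact: measurable_funM.
have lhs0 (w : T) : 0 <= expR (- (xi * Z w)) + xi * Z w by rewrite addr_ge0 ?mulr_ge0.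
have mrhs : measurable_fun setT (fun w => 1 + c * xi `^ r * Z w `^ r).
  by apply: measurable_funD => //; exact: measurable_funM.
have := ge0_expectation_le P mlhs mrhs lhs0 pointwise.
rewrite !ge0_expectationD ?ge0_expectationZl ?expectation_cst ?mulr_ge0 ?powR_ge0//.
- rewrite -(fineK EZ) -(fineK laplace_fin_num) -(fineK EZr_fin).
  by rewrite -!EFinM -!EFinD lee_fin; clear pointwise lhs0; lra.
- exact: measurable_funM.
- by move=> w; rewrite !mulr_ge0 ?powR_ge0.
- exact: measurable_funM.
- by move=> w; rewrite mulr_ge0.
Qed.

Lemma kZ_le0 : kZ P Z xi <= 0.
Proof. by apply: ln_le0; rewrite -lee_fin fineK ?laplace_fin_num ?laplace_le1. Qed.

Section finite_mean.
Hypothesis EZ : ('E_P[Z] \is a fin_num)%E.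

Let laplace_gt0 : 0 < fine laplace.
Proof. exact: lt_le_trans (expR_gt0 _) (expR_mean_le_laplace EZ). Qed.

Lemma kZ_ge_mean : - (xi * mean) <= kZ P Z xi.
Proof.
by rewrite /kZ -[leLHS]expRK ler_ln ?posrE ?expR_gt0 ?expR_mean_le_laplace.
Qed.

Lemma kZ_le_taylor (r c : R) :
  (forall x : R, 0 < x -> `|expR (- x) - 1 + x| <= c * `|x| `^ r) ->
  ('E_P[fun w => (Z w `^ r)%R] < +oo)%E ->
  kZ P Z xi <= - (xi * mean) + c * xi `^ r * fine 'E_P[fun w => (Z w `^ r)%R]%E.
Proof.
move=> taylor EZr; have := laplace_le_taylor taylor EZ EZr.
have : -1 < fine laplace - 1 by rewrite ltrBrDr addNr.
move=> /le_ln1Dx; rewrite addrC subrK /kZ; lra.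
Qed.

End finite_mean.

End log_laplace_transform.

Section powR_ratio_sup.
Context {R : realType}.
Variables (k : R -> R) (r m C : R).
Hypotheses (r1 : 1 < r) (m0 : 0 <= m).
Hypotheses (k_ge : forall x, 0 < x -> - (x * m) <= k x) (k_le0 : forall x, 0 < x -> k x <= 0).
Hypothesis k_le : forall x, 0 < x -> k x <= - (x * m) + C * x `^ r.

Let r0 : 0 < r. Proof. exact: lt_trans r1. Qed.

Lemma norm_k_le x : 0 < x -> `|k x| <= x * m.
Proof. by move=> x0; rewrite ler0_norm ?k_le0// lerNl k_ge. Qed.

Lemma exists_norm_k_gt q : 0 <= q < m -> exists2 x, 0 < x & x * q < `|k x|.
Proof.
move=> /andP[q0 qm]; set e := m - q; have e0 : 0 < e by rewrite subr_gt0.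
have C1 : 0 < `|C| + 1 by have := normr_ge0 C; lra.
set t := e / (`|C| + 1); have t0 : 0 < t by rewrite divr_gt0.
have Ct : C * t < e.
  apply: le_lt_trans (ler_wpM2r (ltW t0) (ler_norm C)) _.
  by rewrite /t mulrA ltr_pdivrMr// mulrC ltr_pM2l// ltrDl.
(* choose x with x^(r-1) = t, so that C x^r = C t x < e x *)
set x := t `^ (r - 1)^-1; have x0 : 0 < x by exact: powR_gt0.
have r10 : 0 < r - 1 by rewrite subr_gt0.
have xt : x `^ (r - 1) = t by rewrite -powRrM mulVf ?gt_eqF// powRr1// ltW.
have xr : x `^ r = x * t by rewrite -xt mulr_powRB1// ltW.
have xCt : x * (C * t) < x * e by rewrite ltr_pM2l.
exists x => //; have := k_le x0; rewrite ler0_norm ?k_le0// xr.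
rewrite /e in xCt; nra.
Qed.

Lemma ereal_sup_powR_ratio :
  ereal_sup [set ((`|k x| `^ r) / (`|x| `^ r))%:E | x in `]0, +oo[] = (m `^ r)%:E.
Proof.
have ratio_le x : 0 < x -> `|k x| `^ r / `|x| `^ r <= m `^ r.
  move=> x0; rewrite (gtr0_norm x0) ler_pdivrMr ?powR_gt0// -powRM// ?(ltW x0)//.
  rewrite mulrC; apply: ge0_ler_powR (norm_k_le x0); rewrite ?nnegrE ?mulr_ge0 ?(ltW x0)//.
  exact: ltW.
set S := ereal_sup _; apply: le_anti; apply/andP; split.
  apply: ge_ereal_sup => _ [x + <-]; rewrite /= in_itv/= andbT => x0.
  by rewrite lee_fin ratio_le.
have S0 : (0 <= S)%E.
  apply: le_ereal_sup_tmp; exists (`|k 1| `^ r / `|1| `^ r)%:E.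
    by exists 1 => //=; rewrite in_itv/= ltr01.
  by rewrite lee_fin divr_ge0 ?powR_ge0.
rewrite leNgt; apply/negP => Slt.
have Sfin : S \is a fin_num by rewrite ge0_fin_numE// (lt_le_trans Slt) ?leey.
set s := fine S; have s0 : 0 <= s by exact: fine_ge0.
set q := s `^ r^-1; have q0 : 0 <= q by exact: powR_ge0.
have qr : q `^ r = s by rewrite -powRrM mulVf ?gt_eqF// powRr1.
have qm : q < m.
  rewrite ltNge; apply/negP => /(ge0_ler_powR (ltW r0)).
  by rewrite qr !nnegrE => /(_ m0 q0); rewrite leNgt -lte_fin fineK ?Slt.
have [x x0 kx] := exists_norm_k_gt (q := q) (introT andP (conj q0 qm)).
have : s < `|k x| `^ r / `|x| `^ r.
  rewrite (gtr0_norm x0) ltr_pdivlMr ?powR_gt0// -qr -powRM ?(ltW x0)// mulrC.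
  by apply: (gt0_ltr_powR r0) kx; rewrite nnegrE ?mulr_ge0 ?(ltW x0).
apply/negP; rewrite -leNgt -lee_fin fineK//.
by apply: ereal_sup_ubound; exists x => //=; rewrite in_itv/= x0.
Qed.

End powR_ratio_sup.

Theorem lemmaA3 (d : measure_display) (T : measurableType d) (R : realType)
  (P : probability T R) (r c : R) (Z : T -> R) :
  1 < r < 2 ->
  (forall x : R, 0 < x -> `|expR (- x) - 1 + x| <= c * `|x| `^ r) ->
  measurable_fun setT Z ->
  (forall w, 0 <= Z w) ->
  ('E_P[fun w => (Z w `^ r)%R] < +oo)%E ->
  (forall xi : R, 0 <= xi -> 2 * fine 'E_P[Z] * xi <= 1 ->
     `|kZ P Z xi + xi * fine 'E_P[Z]|
       <= c * xi `^ r * fine 'E_P[fun w => (Z w `^ r)%R]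
          + xi ^+ 2 * (fine 'E_P[Z]) ^+ 2)
  /\
  ereal_sup [set ((`|kZ P Z xi| `^ r) / (`|xi| `^ r))%:E | xi in `]0, +oo[]
    = ((fine 'E_P[Z]) `^ r)%:E.
Proof.
move=> /andP[r1 _] taylor mZ Z0 EZr.
have EZ := expectation_fin_num_powR (ltW r1) mZ Z0 EZr.
have mean0 : 0 <= fine 'E_P[Z]%E by exact/fine_ge0/expectation_ge0.
split=> [xi xi0 _|].
  have := kZ_ge_mean mZ Z0 xi0 EZ; have := kZ_le_taylor mZ Z0 xi0 EZ taylor EZr.
  have : 0 <= xi ^+ 2 * fine 'E_P[Z]%E ^+ 2 by rewrite mulr_ge0 ?exprn_ge0.
  set M := fine 'E_P[fun w => _]%E => sq_ge0 k_le k_ge.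
  by rewrite ger0_norm; lra.
apply: (ereal_sup_powR_ratio (C := c * fine 'E_P[fun w => (Z w `^ r)%R]%E) r1 mean0).
- by move=> xi /ltW xi0; exact: kZ_ge_mean.
- by move=> xi /ltW xi0; exact: kZ_le0.
- by move=> xi /ltW xi0; rewrite mulrAC; exact: kZ_le_taylor.
Qed.
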